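(* Consider the LQ tracking problem minimizing $\frac12\sum_{t=0}^{N-1}\big[(x_t-\theta_t)^\top Q_t(x_t-\theta_t)+u_t^\top R_tu_t\big]+\frac12(x_N-\theta_N)^\top Q_N(x_N-\theta_N)$ subject to $x_{t+1}=Ax_t+Bu_t$, $x_0=0$, with $(A,B)$ controllable, $Q_t\in\mathcal Q$, $R_t\in\mathcal R$ ($0\le t\le N-1$), $Q_N\in\mathcal P$, and $\|\theta_t\|\le\bar\theta$ for all $t$. Then there is $\bar x$, independent of $t$, $N$ and $W$ (depending only on $A,B,\mu_f,l_f,\mu_g,l_g,\bar\theta$), such that the optimal states satisfy $\|x^*_t\|\le\bar x$ for all $0\le t\le N$.
   Context: Fix $\mu_f,\mu_g>0$, $0<l_f,l_g<\infty$. $P^e(Q,R)$ denotes the positive definite solution of the DARE $P=Q+A^\top(P-PB(B^\top PB+R)^{-1}B^\top P)A$. $\mathcal Q=\{Q:\mu_fI_n\le Q\le l_fI_n\}$, $\mathcal R=\{R:\mu_gI_m\le R\le l_gI_m\}$, $\bar P=P^e(l_fI_n,l_gI_m)$, $\underline P=P^e(\mu_fI_n,\mu_gI_m)$, $\mathcal P=\{P:\underline P\le P\le\bar P\}$ (Loewner order). *)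

From HB Require Import structures.
From mathcomp Require Import all_boot all_order all_algebra.
Set Implicit Arguments. Unset Strict Implicit. Unset Printing Implicit Defensive.
Import Order.TTheory GRing.Theory Num.Theory.
Local Open Scope ring_scope.

Section Defs.
Variable R : rcfType.

Definition qform n (M : 'M[R]_n) (x : 'cV[R]_n) : R := (x^T *m M *m x) 0 0.

Definition vnorm n (x : 'cV[R]_n) : R := Num.sqrt ((x^T *m x) 0 0).

Definition sym n (M : 'M[R]_n) : Prop := M^T = M.

Definition loewner_le n (M1 M2 : 'M[R]_n) : Prop :=
  forall x : 'cV[R]_n, qform M1 x <= qform M2 x.

Definition posdef n (M : 'M[R]_n) : Prop :=
  sym M /\ forall x : 'cV[R]_n, x != 0 -> 0 < qform M x.

Definition controllable n m (A : 'M[R]_n) (B : 'M[R]_(n, m)) : Prop :=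
  \rank (\mxrow_(k < n) (A ^+ k *m B)) = n.

Definition DARE_pd_sol n m (A : 'M[R]_n) (B : 'M[R]_(n, m))
    (Q : 'M[R]_n) (Rw : 'M[R]_m) (P : 'M[R]_n) : Prop :=
  posdef P /\
  P = Q + A^T *m (P - P *m B *m invmx (B^T *m P *m B + Rw) *m B^T *m P) *m A.

(* sets \mathcal Q, \mathcal R, \mathcal P (matrices symmetric) *)
Definition in_box n (lo hi : 'M[R]_n) (M : 'M[R]_n) : Prop :=
  sym M /\ loewner_le lo M /\ loewner_le M hi.

Fixpoint traj n m (A : 'M[R]_n) (B : 'M[R]_(n, m)) (u : nat -> 'cV[R]_m)
    (t : nat) : 'cV[R]_n :=
  match t with
  | 0 => 0
  | t'.+1 => A *m traj A B u t' + B *m u t'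
  end.

Definition track_cost n m (A : 'M[R]_n) (B : 'M[R]_(n, m)) (N : nat)
    (Q : nat -> 'M[R]_n) (Rw : nat -> 'M[R]_m) (QN : 'M[R]_n)
    (theta : nat -> 'cV[R]_n) (u : nat -> 'cV[R]_m) : R :=
  let x := traj A B u in
  2^-1 * (\sum_(t < N) (qform (Q t) (x t - theta t) + qform (Rw t) (u t)))
  + 2^-1 * qform QN (x N - theta N).

Definition optimal_input n m (A : 'M[R]_n) (B : 'M[R]_(n, m)) (N : nat)
    (Q : nat -> 'M[R]_n) (Rw : nat -> 'M[R]_m) (QN : 'M[R]_n)
    (theta : nat -> 'cV[R]_n) (u : nat -> 'cV[R]_m) : Prop :=
  forall v : nat -> 'cV[R]_m,
    track_cost A B N Q Rw QN theta u <= track_cost A B N Q Rw QN theta v.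

End Defs.

(* Write y_k = |x*_k|^2 for the optimal state.  The proof has three parts.
   1. Steering.  Controllability gives a right inverse of the Kalman matrix,
      hence an input, linear in the target, steering 0 to any state in n
      steps.  Combining two such inputs, for every window [a, b] of length at
      least n (or the whole horizon) we build a "bridge" input that drives
      x*_a to 0 in n steps, idles, and arrives at x*_b at time b (at 0 when
      b = N).  Its window cost is at most c_start y_a + c_end y_b + O(b - a).
   2. Window inequality.  Splicing the bridge into u* gives an admissible
      competitor; optimality of u* and the lower box bounds on Q_t, R_t give
        sum_(a <= k <= b) y_k <= C (y_a + [b < N] y_b) + D (b - a + 1).
   3. A lemma on real sequences: if y_0 = 0 and the window inequality holds
      for all long windows, the window sums around t decay geometrically as
      the window shrinks, whence y_t <= D C (2n + 4), uniformly in t and N. *)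

From mathcomp Require Import all_boot all_order all_algebra.
From mathcomp Require Import ring lra zify.
Import Order.TTheory GRing.Theory Num.Theory.
Local Open Scope ring_scope.
Set Implicit Arguments. Unset Strict Implicit.

Section SquaredNorm.
Variable R : rcfType.

Definition dot k (x y : 'cV[R]_k) : R := (x^T *m y) 0 0.

Definition sqnorm k (x : 'cV[R]_k) : R := dot x x.

Lemma dotE k (x y : 'cV[R]_k) : dot x y = \sum_i x i 0 * y i 0.
Proof. by rewrite /dot mxE; apply: eq_bigr => i _; rewrite mxE. Qed.

Lemma sqnormE k (x : 'cV[R]_k) : sqnorm x = \sum_i x i 0 ^+ 2.
Proof. by rewrite /sqnorm dotE; apply: eq_bigr => i _; rewrite expr2. Qed.

Lemma sqnorm_ge0 k (x : 'cV[R]_k) : 0 <= sqnorm x.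
Proof. by rewrite sqnormE; apply: sumr_ge0 => i _; apply: sqr_ge0. Qed.

Lemma sqnorm0 k : sqnorm (0 : 'cV[R]_k) = 0.
Proof. by rewrite sqnormE big1 // => i _; rewrite mxE expr0n. Qed.

Lemma sqnormN k (x : 'cV[R]_k) : sqnorm (- x) = sqnorm x.
Proof. by rewrite !sqnormE; apply: eq_bigr => i _; rewrite mxE sqrrN. Qed.

Lemma dot_le k (x y : 'cV[R]_k) : dot x y <= 2^-1 * (sqnorm x + sqnorm y).
Proof.
rewrite dotE !sqnormE -big_split /= mulr_sumr; apply: ler_sum => i _.
have := sqr_ge0 (x i 0 - y i 0); lra.
Qed.

Lemma sqnormD_le k (x y : 'cV[R]_k) : sqnorm (x + y) <= 2 * (sqnorm x + sqnorm y).
Proof.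
rewrite !sqnormE -big_split /= mulr_sumr; apply: ler_sum => i _.
rewrite mxE; have := sqr_ge0 (x i 0 - y i 0); lra.
Qed.

Lemma sqnormB_le k (x y : 'cV[R]_k) : sqnorm (x - y) <= 2 * (sqnorm x + sqnorm y).
Proof. by rewrite -(sqnormN y) sqnormD_le. Qed.

Lemma coord_prod_le k (x : 'cV[R]_k) i j : `|x i 0| * `|x j 0| <= sqnorm x.
Proof.
have coord_le l : `|x l 0| ^+ 2 <= sqnorm x.
  rewrite real_normK ?num_real // sqnormE (bigD1 l) //= lerDl.
  by apply: sumr_ge0 => l' _; apply: sqr_ge0.
have := coord_le i; have := coord_le j; have := sqr_ge0 (`|x i 0| - `|x j 0|).
nra.
Qed.

Lemma sum_mul_sq_le k (c : 'I_k -> R) (x : 'cV[R]_k) :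
  (\sum_j c j * x j 0) ^+ 2 <= (\sum_j `|c j|) ^+ 2 * sqnorm x.
Proof.
have abs_le : (\sum_j c j * x j 0) ^+ 2 <= (\sum_j `|c j| * `|x j 0|) ^+ 2.
  rewrite -[X in X <= _]real_normK ?num_real //.
  apply: lerXn2r; rewrite ?nnegrE ?normr_ge0 //.
    by apply: sumr_ge0 => j _; rewrite mulr_ge0.
  apply: (le_trans (ler_norm_sum _ _ _)); apply: ler_sum => j _.
  by rewrite normrM.
apply: (le_trans abs_le); rewrite !expr2 -mulrA !mulr_suml; apply: ler_sum => i _.
rewrite !mulr_sumr; apply: ler_sum => j _.
rewrite mulrACA -[in X in X <= _]mulrA -subr_ge0 -mulrBr.
apply: mulr_ge0 => //; rewrite -mulrBr; apply: mulr_ge0 => //.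
by rewrite subr_ge0 coord_prod_le.
Qed.

(* A crude bound on the squared operator norm: the sum over the rows of the
   squared l1-norms of the rows. *)
Definition gain k l (M : 'M[R]_(k, l)) : R := \sum_i (\sum_j `|M i j|) ^+ 2.

Lemma gain_ge0 k l (M : 'M[R]_(k, l)) : 0 <= gain M.
Proof. by apply: sumr_ge0 => i _; apply: sqr_ge0. Qed.

Lemma sum_gain_ge0 k l p (M : 'I_p -> 'M[R]_(k, l)) : 0 <= \sum_j gain (M j).
Proof. by apply: sumr_ge0 => j _; apply: gain_ge0. Qed.

Lemma gain_le_sum k l p (M : nat -> 'M[R]_(k, l)) j :
  (j < p)%N -> gain (M j) <= \sum_(i < p) gain (M i).
Proof.
move=> lt_jp; rewrite (bigD1 (Ordinal lt_jp)) //= lerDl.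
by apply: sumr_ge0 => i _; apply: gain_ge0.
Qed.

Lemma sqnorm_mulmx_le k l (M : 'M[R]_(k, l)) x : sqnorm (M *m x) <= gain M * sqnorm x.
Proof.
rewrite sqnormE /gain mulr_suml; apply: ler_sum => i _.
by rewrite mxE; apply: sum_mul_sq_le.
Qed.

Lemma qform_le_gain k (M : 'M[R]_k) x : qform M x <= 2^-1 * (1 + gain M) * sqnorm x.
Proof.
rewrite /qform -mulmxA -/(dot x (M *m x)); apply: (le_trans (dot_le _ _)).
have := sqnorm_mulmx_le M x; have := sqnorm_ge0 x; nra.
Qed.

Lemma qform0 k (M : 'M[R]_k) : qform M 0 = 0.
Proof. by rewrite /qform mulmx0 mxE. Qed.

Lemma qform_scalar k (c : R) (x : 'cV[R]_k) : qform (c%:M) x = c * sqnorm x.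
Proof. by rewrite /qform mul_mx_scalar -scalemxAl mxE. Qed.

Lemma posdef_qform_ge0 k (M : 'M[R]_k) v : posdef M -> 0 <= qform M v.
Proof.
move=> [_ pos]; have [->|v_neq0] := eqVneq v 0; first by rewrite qform0.
exact/ltW/pos.
Qed.

Lemma box_lower k (mu l : R) (M : 'M[R]_k) x :
  in_box (mu%:M) (l%:M) M -> mu * sqnorm x <= qform M x.
Proof. by move=> [_ [lo _]]; rewrite -qform_scalar; apply: lo. Qed.

Lemma box_upper k (mu l : R) (M : 'M[R]_k) x :
  in_box (mu%:M) (l%:M) M -> qform M x <= l * sqnorm x.
Proof. by move=> [_ [_ hi]]; rewrite -qform_scalar; apply: hi. Qed.

Lemma sqnorm_le_of_vnorm k (x : 'cV[R]_k) (c : R) : vnorm x <= c -> sqnorm x <= c ^+ 2.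
Proof.
move=> le_xc; have vnorm_ge0 : 0 <= vnorm x by apply: sqrtr_ge0.
rewrite -[sqnorm x](sqr_sqrtr (sqnorm_ge0 x)).
by apply: lerXn2r; rewrite ?nnegrE //; apply: le_trans le_xc.
Qed.

Lemma vnorm_le_sqrt k (x : 'cV[R]_k) (c : R) : sqnorm x <= c -> vnorm x <= Num.sqrt c.
Proof.
move=> le_xc; rewrite /vnorm -/(dot x x) -/(sqnorm x) ler_sqrt //.
exact: le_trans (sqnorm_ge0 x) le_xc.
Qed.

End SquaredNorm.

Section Evolution.
Variable R : rcfType.
Variables n m : nat.
Variable A : 'M[R]_n.
Variable B : 'M[R]_(n, m).

Fixpoint evolve (z : 'cV[R]_n) (v : nat -> 'cV[R]_m) (j : nat) : 'cV[R]_n :=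
  if j is j'.+1 then A *m evolve z v j' + B *m v j' else z.

Lemma eq_evolve z v v' j : v =1 v' -> evolve z v j = evolve z v' j.
Proof. by move=> eq_v; elim: j => //= j ->; rewrite eq_v. Qed.

Lemma evolveD z1 z2 v1 v2 j :
  evolve (z1 + z2) (fun i => v1 i + v2 i) j = evolve z1 v1 j + evolve z2 v2 j.
Proof.
elim: j => //= j ->; rewrite !mulmxDr -!addrA; congr (_ + _).
by rewrite addrCA addrA [X in X + _]addrC -addrA.
Qed.

Lemma evolve_free z j : evolve z (fun _ => 0) j = A ^+ j *m z.
Proof.
elim: j => [|j IH] /=; first by rewrite expr0 mul1mx.
by rewrite IH mulmx0 addr0 exprS mulmxA.
Qed.

Lemma evolve0E v j : evolve 0 v j = \sum_(i < j) A ^+ (j.-1 - i) *m B *m v i.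
Proof.
elim: j => [|j IH] /=; first by rewrite big_ord0.
rewrite IH big_ord_recr /= subnn expr0 mul1mx mulmx_sumr; congr (_ + _).
have expS k : A ^+ k.+1 = A *m A ^+ k by exact: exprS.
apply: eq_bigr => i _; rewrite !mulmxA -expS; congr (_ ^+ _ *m _ *m _).
by case: i => i /= lt_ij; case: j lt_ij IH => // j lt_ij _ /=; rewrite -subSn.
Qed.

(* The state map of a linear feedback v_i = S_i z, as a matrix acting on z. *)
Fixpoint evolve_mx (M0 : 'M[R]_n) (S : nat -> 'M[R]_(m, n)) (j : nat) : 'M[R]_n :=
  if j is j'.+1 then A *m evolve_mx M0 S j' + B *m S j' else M0.

Lemma evolve_mxE M0 S z v j :
  (forall i, v i = S i *m z) -> evolve (M0 *m z) v j = evolve_mx M0 S j *m z.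
Proof. by move=> vE; elim: j => //= j ->; rewrite vE mulmxDl !mulmxA. Qed.

Lemma evolve_rest z v j0 j : (forall i, (j0 <= i)%N -> v i = 0) ->
  evolve z v j0 = 0 -> (j0 <= j)%N -> evolve z v j = 0.
Proof.
move=> v0 rest; elim: j => [|j IH]; first by rewrite leqn0 => /eqP e; move: rest; rewrite e.
rewrite leq_eqVlt => /orP [/eqP e | lt_j0j] /=; first by move: rest; rewrite e.
by rewrite IH // v0 // !mulmx0 addr0.
Qed.

End Evolution.

Section Steering.
Variable R : rcfType.
Variables n m : nat.
Variable A : 'M[R]_n.
Variable B : 'M[R]_(n, m).
Hypothesis ctrl : controllable A B.

(* The Kalman matrix [B, AB, ..., A^(n-1) B] has full row rank, hence a right
   inverse. *)
Definition kalman := \mxrow_(k < n) (A ^+ k *m B).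
Definition kalman_rinv := (pinvmx kalman^T)^T.

Lemma kalman_rinvK : kalman *m kalman_rinv = 1%:M.
Proof.
have full : row_full kalman^T by rewrite /row_full mxrank_tr ctrl.
have := mulmxKpV (submx_full (1%:M : 'M[R]_n) full); rewrite mul1mx => eq1.
by apply: trmx_inj; rewrite /kalman_rinv trmx_mul trmxK eq1 trmx1.
Qed.

Definition steer_gain (i : nat) : 'M[R]_(m, n) :=
  if (insub (n.-1 - i)%N : option 'I_n) is Some k then
    if (i < n)%N then submxcol kalman_rinv k else 0
  else 0.

(* The steering input towards z: it brings 0 to z at time n, then stops. *)
Definition steer (z : 'cV[R]_n) (i : nat) : 'cV[R]_m := steer_gain i *m z.

Lemma steer_ge z i : (n <= i)%N -> steer z i = 0.
Proof.
move=> le_ni; rewrite /steer /steer_gain.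
by case: insubP => [k _ _|_]; rewrite ?ltnNge ?le_ni mul0mx.
Qed.

Lemma steer_ord z (k : 'I_n) : steer z (n.-1 - k) = submxcol (kalman_rinv *m z) k.
Proof.
have lt_kn := ltn_ord k.
have idx_k : (n.-1 - (n.-1 - k) = k)%N by lia.
have lt_idx : (n.-1 - k < n)%N by lia.
rewrite /steer /steer_gain idx_k; case: insubP => [k' _ ek|]; last by rewrite ltn_ord.
by rewrite (_ : k' = k) ?lt_idx ?submxcol_mul //; apply: val_inj.
Qed.

(* The Kalman matrix applied to the stacked blocks of kalman_rinv z gives z. *)
Lemma evolve_steer z : evolve A B 0 (steer z) n = z.
Proof.
rewrite evolve0E (reindex_inj rev_ord_inj) /=.
transitivity (\sum_(k < n) A ^+ k *m B *m submxcol (kalman_rinv *m z) k).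
  apply: eq_bigr => k _; have lt_kn := ltn_ord k.
  have e1 : (n.-1 - rev_ord k = k)%N by rewrite /=; lia.
  have e2 : (n - k.+1 = n.-1 - k)%N by lia.
  by rewrite e1 e2 steer_ord.
by rewrite -mul_mxrow_mxcol submxcolK mulmxA -/kalman kalman_rinvK mul1mx.
Qed.

End Steering.

Lemma term_le_sum_nat (R : rcfType) (y : nat -> R) a b t :
  (forall k, 0 <= y k) -> (a <= t < b)%N -> y t <= \sum_(a <= k < b) y k.
Proof.
move=> y_ge0 /andP [le_at lt_tb]; rewrite (big_cat_nat (n := t)) //=; last exact: ltnW.
rewrite [\sum_(t <= i < b) _]big_ltn //=.
have := @sumr_ge0 R _ (index_iota a t) xpredT y (fun k _ => y_ge0 k).
have := @sumr_ge0 R _ (index_iota t.+1 b) xpredT y (fun k _ => y_ge0 k).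
lra.
Qed.

Section Bridge.
Variable R : rcfType.
Variables n m : nat.
Variable A : 'M[R]_n.
Variable B : 'M[R]_(n, m).
Hypothesis ctrl : controllable A B.

(* The bridge input on a window of length L from z0 to z1: [kill z0] brings z0
   to 0 during the first n steps (it steers 0 to - A^n z0), and [arrive L z1]
   steers 0 to z1 during the last n steps.  By linearity the superposition
   goes from z0 to z1 in L steps as soon as n <= L. *)
Definition kill_gain i : 'M[R]_(m, n) := steer_gain A B i *m (- A ^+ n).
Definition kill (z0 : 'cV[R]_n) (i : nat) : 'cV[R]_m := kill_gain i *m z0.
Definition arrive (L : nat) (z1 : 'cV[R]_n) (i : nat) : 'cV[R]_m :=
  if (L - n <= i)%N then steer A B z1 (i - (L - n)) else 0.
Definition bridge L z0 z1 i := kill z0 i + arrive L z1 i.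

Lemma killE z0 i : kill z0 i = steer A B (- (A ^+ n *m z0)) i.
Proof. by rewrite /kill /steer /kill_gain -mulmxA mulNmx. Qed.

Lemma kill_ge z0 i : (n <= i)%N -> kill z0 i = 0.
Proof. by move=> le_ni; rewrite killE steer_ge. Qed.

Lemma evolve_bridge L z0 z1 j :
  evolve A B z0 (bridge L z0 z1) j = evolve A B z0 (kill z0) j + evolve A B 0 (arrive L z1) j.
Proof. by rewrite -evolveD addr0. Qed.

Lemma evolve_arrive L z1 j :
  evolve A B 0 (arrive L z1) j = evolve A B 0 (steer A B z1) (j - (L - n)).
Proof.
elim: j => [|j IH]; first by rewrite sub0n.
rewrite /= IH /arrive; case: leqP => le_j; first by rewrite subSn.
have -> : (j.+1 - (L - n) = 0)%N by lia.
have -> : (j - (L - n) = 0)%N by lia.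
by rewrite /= !mulmx0 addr0.
Qed.

Lemma evolve_kill_rest z0 j : (n <= j)%N -> evolve A B z0 (kill z0) j = 0.
Proof.
move=> le_nj; apply: (evolve_rest (j0 := n)) => //; first exact: kill_ge.
have -> : evolve A B z0 (kill z0) n = evolve A B (z0 + 0) (fun i => 0 + kill z0 i) n.
  by rewrite addr0; apply: eq_evolve => i; rewrite add0r.
by rewrite evolveD evolve_free (eq_evolve _ _ _ _ (killE z0)) evolve_steer // subrr.
Qed.

(* The bridge ends at z1; on the whole horizon it may also be used for short
   windows, when it joins 0 to 0 with the zero input. *)
Lemma evolve_bridge_end L z0 z1 :
  ((n <= L)%N \/ (z0 = 0 /\ z1 = 0)) -> evolve A B z0 (bridge L z0 z1) L = z1.
Proof.
move=> [le_nL | [-> ->]].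
  rewrite evolve_bridge evolve_kill_rest // add0r evolve_arrive.
  have -> : (L - (L - n) = n)%N by lia.
  exact: evolve_steer.
rewrite (@eq_evolve _ _ _ A B 0 _ (fun _ => 0) L) ?evolve_free ?mulmx0 // => i.
by rewrite /bridge /kill /arrive /steer !mulmx0 add0r if_same.
Qed.

Definition K_kill_st := \sum_(j < n) gain (evolve_mx A B 1%:M kill_gain j).
Definition K_kill_in := \sum_(j < n) gain (kill_gain j).
Definition K_arr_st := \sum_(j < n) gain (evolve_mx A B 0 (steer_gain A B) j).
Definition K_arr_in := \sum_(j < n) gain (steer_gain A B j).

Lemma kill_state_le z0 j :
  sqnorm (evolve A B z0 (kill z0) j) <= (j < n)%N%:R * K_kill_st * sqnorm z0.
Proof.
case: (ltnP j n) => [lt_jn | le_nj]; last by rewrite evolve_kill_rest // sqnorm0 !mul0r.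
have -> : evolve A B z0 (kill z0) j = evolve_mx A B 1%:M kill_gain j *m z0.
  by rewrite -{1}[z0]mul1mx; apply: evolve_mxE.
rewrite mul1r.
apply: le_trans (sqnorm_mulmx_le _ _) _; apply: ler_wpM2r; first exact: sqnorm_ge0.
exact: (gain_le_sum (evolve_mx A B 1%:M kill_gain) lt_jn).
Qed.

Lemma kill_input_le z0 j : sqnorm (kill z0 j) <= (j < n)%N%:R * K_kill_in * sqnorm z0.
Proof.
case: (ltnP j n) => [lt_jn | le_nj]; last by rewrite kill_ge // sqnorm0 !mul0r.
rewrite mul1r; apply: le_trans (sqnorm_mulmx_le _ _) _.
apply: ler_wpM2r; first exact: sqnorm_ge0.
exact: (gain_le_sum (kill_gain) lt_jn).
Qed.

Lemma arrive_state_le L z1 j : (j < L)%N ->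
  sqnorm (evolve A B 0 (arrive L z1) j) <= (L - n <= j)%N%:R * K_arr_st * sqnorm z1.
Proof.
move=> lt_jL; rewrite evolve_arrive; case: (leqP (L - n) j) => [le_j | lt_j]; last first.
  have -> : (j - (L - n) = 0)%N by lia.
  by rewrite /= sqnorm0 !mul0r.
have lt_i : (j - (L - n) < n)%N by lia.
have -> : evolve A B 0 (steer A B z1) (j - (L - n))
    = evolve_mx A B 0 (steer_gain A B) (j - (L - n)) *m z1.
  by rewrite -(mul0mx n z1); apply: evolve_mxE.
rewrite mul1r.
apply: le_trans (sqnorm_mulmx_le _ _) _; apply: ler_wpM2r; first exact: sqnorm_ge0.
exact: (gain_le_sum (evolve_mx A B 0 (steer_gain A B)) lt_i).
Qed.

Lemma arrive_input_le L z1 j : (j < L)%N ->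
  sqnorm (arrive L z1 j) <= (L - n <= j)%N%:R * K_arr_in * sqnorm z1.
Proof.
move=> lt_jL; rewrite /arrive; case: (leqP (L - n) j) => [le_j | _]; last first.
  by rewrite sqnorm0 !mul0r.
have lt_i : (j - (L - n) < n)%N by lia.
rewrite mul1r; apply: le_trans (sqnorm_mulmx_le _ _) _.
apply: ler_wpM2r; first exact: sqnorm_ge0.
exact: (gain_le_sum (steer_gain A B) lt_i).
Qed.

End Bridge.

Lemma count_early (R : rcfType) (n L : nat) : \sum_(j < L) ((j < n)%N%:R : R) <= n%:R.
Proof.
suff : \sum_(j < L) ((j < n)%N%:R : R) <= (minn L n)%:R.
  by move=> h; apply: le_trans h _; rewrite ler_nat geq_minr.
elim: L => [|L IH]; first by rewrite big_ord0.
rewrite big_ord_recr /=; apply: le_trans (lerD IH (lexx _)) _.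
by rewrite -natrD ler_nat; case: ltnP => h; lia.
Qed.

Lemma count_late (R : rcfType) (n L : nat) : \sum_(j < L) ((L - n <= j)%N%:R : R) <= n%:R.
Proof.
rewrite (reindex_inj rev_ord_inj) /=; apply: le_trans (count_early R n L).
by apply: ler_sum => j _; rewrite ler_nat; have := ltn_ord j; case: ltnP; lia.
Qed.

Section BridgeCost.
Variable R : rcfType.
Variables n m : nat.
Variable A : 'M[R]_n.
Variable B : 'M[R]_(n, m).
Hypothesis ctrl : controllable A B.
Variables (lf lg T : R).
Hypotheses (lf_ge0 : 0 <= lf) (lg_ge0 : 0 <= lg).

(* Per-step costs of the two halves of the bridge, per unit squared norm of
   the start, resp. end, state. *)
Definition kill_cost := 4 * lf * K_kill_st A B + 2 * lg * K_kill_in A B.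
Definition arrive_cost := 4 * lf * K_arr_st A B + 2 * lg * K_arr_in A B.

Lemma kill_cost_ge0 : 0 <= kill_cost.
Proof. by rewrite /kill_cost addr_ge0 // !mulr_ge0 // sum_gain_ge0. Qed.

Lemma arrive_cost_ge0 : 0 <= arrive_cost.
Proof. by rewrite /arrive_cost addr_ge0 // !mulr_ge0 // sum_gain_ge0. Qed.

Lemma bridge_stage_le L z0 z1 (Qj : 'M[R]_n) (Rj : 'M[R]_m) (th : 'cV[R]_n) (j : 'I_L) :
  (forall v, qform Qj v <= lf * sqnorm v) -> (forall v, qform Rj v <= lg * sqnorm v) ->
  sqnorm th <= T ->
  qform Qj (evolve A B z0 (bridge A B L z0 z1) j - th) + qform Rj (bridge A B L z0 z1 j)
  <= (j < n)%N%:R * (kill_cost * sqnorm z0)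
     + (L - n <= j)%N%:R * (arrive_cost * sqnorm z1) + 2 * lf * T.
Proof.
move=> Qj_le Rj_le th_le; have lt_jL := ltn_ord j.
set a := ((j < n)%N%:R : R); set b := ((L - n <= j)%N%:R : R).
set n0 := sqnorm z0; set n1 := sqnorm z1.
have ks := kill_state_le ctrl z0 j; have as_ := arrive_state_le A B z1 lt_jL.
have ki := kill_input_le A B z0 j; have ai := arrive_input_le A B z1 lt_jL.
rewrite -/a -/b -/n0 -/n1 in ks as_ ki ai.
have state_le : sqnorm (evolve A B z0 (bridge A B L z0 z1) j - th)
    <= 4 * (a * K_kill_st A B * n0 + b * K_arr_st A B * n1) + 2 * T.
  rewrite evolve_bridge.
  have := sqnormB_le (evolve A B z0 (kill A B z0) j + evolve A B 0 (arrive A B L z1) j) th.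
  have := sqnormD_le (evolve A B z0 (kill A B z0) j) (evolve A B 0 (arrive A B L z1) j).
  lra.
have input_le : sqnorm (bridge A B L z0 z1 j)
    <= 2 * (a * K_kill_in A B * n0 + b * K_arr_in A B * n1).
  by have := sqnormD_le (kill A B z0 j) (arrive A B L z1 j); rewrite /bridge; lra.
apply: le_trans (lerD (Qj_le _) (Rj_le _)) _.
apply: le_trans (lerD (ler_wpM2l lf_ge0 state_le) (ler_wpM2l lg_ge0 input_le)) _.
by rewrite /kill_cost /arrive_cost le_eqVlt; apply/orP; left; apply/eqP; ring.
Qed.

(* Window cost of the bridge: each half is active during at most n steps. *)
Lemma bridge_cost_le L z0 z1 (Qs : nat -> 'M[R]_n) (Rs : nat -> 'M[R]_m)
    (th : nat -> 'cV[R]_n) :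
  (forall j, (j < L)%N -> forall v, qform (Qs j) v <= lf * sqnorm v) ->
  (forall j, (j < L)%N -> forall v, qform (Rs j) v <= lg * sqnorm v) ->
  (forall j, (j < L)%N -> sqnorm (th j) <= T) ->
  \sum_(j < L) (qform (Qs j) (evolve A B z0 (bridge A B L z0 z1) j - th j)
                + qform (Rs j) (bridge A B L z0 z1 j))
  <= n%:R * kill_cost * sqnorm z0 + n%:R * arrive_cost * sqnorm z1 + L%:R * (2 * lf * T).
Proof.
move=> Qs_le Rs_le th_le.
have stage_le (j : 'I_L) := bridge_stage_le z0 z1 j (Qs_le j (ltn_ord j))
  (Rs_le j (ltn_ord j)) (th_le j (ltn_ord j)).
apply: le_trans (ler_sum _ (fun j _ => stage_le j)) _.
rewrite !big_split /= -!mulr_suml sumr_const card_ord -!mulrA.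
have c0 := mulr_ge0 kill_cost_ge0 (sqnorm_ge0 z0).
have c1 := mulr_ge0 arrive_cost_ge0 (sqnorm_ge0 z1).
apply: lerD; last by rewrite -mulr_natr mulrC le_eqVlt; apply/orP; left; apply/eqP; ring.
by apply: lerD; apply: ler_wpM2r => //; [exact: count_early | exact: count_late].
Qed.

End BridgeCost.

Section Splice.
Variable R : rcfType.
Variables n m : nat.
Variable A : 'M[R]_n.
Variable B : 'M[R]_(n, m).
Variables (N : nat) (Q : nat -> 'M[R]_n) (Rw : nat -> 'M[R]_m) (QN : 'M[R]_n)
  (theta : nat -> 'cV[R]_n) (u : nat -> 'cV[R]_m).
Variables (a b : nat).
Hypothesis window : (a <= b <= N)%N.

Let x := traj A B u.

Definition wend := if (b < N)%N then x b else 0.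

(* The competitor: u outside [a, b), the bridge from x_a to wend inside. *)
Definition splice k := if (a <= k < b)%N then bridge A B (b - a) (x a) wend (k - a) else u k.

Lemma splice_before k : (k <= a)%N -> traj A B splice k = x k.
Proof.
elim: k => [|k IH] le_ka //=.
have outside : (a <= k < b)%N = false by lia.
by rewrite IH ?(ltnW le_ka) // /splice outside.
Qed.

Lemma splice_window j : (j <= b - a)%N ->
  traj A B splice (j + a) = evolve A B (x a) (bridge A B (b - a) (x a) wend) j.
Proof.
elim: j => [|j IH] le_j; first by rewrite add0n splice_before.
have inside : (a <= j + a < b)%N by lia.
by rewrite addSn /= IH ?(ltnW le_j) // /splice inside addnK.
Qed.

Definition stage (v : nat -> 'cV[R]_m) k :=
  qform (Q k) (traj A B v k - theta k) + qform (Rw k) (v k).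

Lemma stage_sum_split (v : nat -> 'cV[R]_m) :
  \sum_(k < N) stage v k = \sum_(0 <= k < a) stage v k + \sum_(a <= k < b) stage v k
    + \sum_(b <= k < N) stage v k.
Proof.
rewrite -(big_mkord xpredT) (big_cat_nat (n := a)) //=; last by lia.
by rewrite (big_cat_nat (n := b) (m := a)) /= ?addrA //; lia.
Qed.

Lemma splice_window_cost :
  \sum_(a <= k < b) stage splice k =
  \sum_(j < b - a) (qform (Q (j + a)) (evolve A B (x a) (bridge A B (b - a) (x a) wend) j
                                       - theta (j + a))
                    + qform (Rw (j + a)) (bridge A B (b - a) (x a) wend j)).
Proof.
rewrite -{1}[a]add0n big_addn big_mkord; apply: eq_bigr => j _.
have lt_j := ltn_ord j; have inside : (a <= j + a < b)%N by lia.
by rewrite /stage (splice_window (ltnW lt_j)) /splice inside addnK.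
Qed.

Hypothesis long_window : (n <= b - a)%N \/ (a = 0%N /\ b = N).
Hypothesis ctrl : controllable A B.

Lemma splice_at_end k : k = b -> traj A B splice k = wend.
Proof.
move=> ->; rewrite -(subnK (_ : a <= b)%N); last by lia.
rewrite splice_window // evolve_bridge_end //.
case: long_window => [? | [ea eb]]; [by left | right].
by rewrite /wend /x ea eb ltnn.
Qed.

Lemma splice_after k : (b < N)%N -> (b <= k)%N -> traj A B splice k = x k.
Proof.
move=> lt_bN; elim: k => [|k IH] le_bk //.
case: (ltnP b k.+1) => [lt_bk | le_kb].
  have outside : (a <= k < b)%N = false by lia.
  by rewrite /= IH // /splice outside.
have eb : k.+1 = b by lia.
by rewrite (splice_at_end eb) /wend lt_bN eb.
Qed.

Lemma splice_final : traj A B splice N = if (b < N)%N then x N else 0.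
Proof.
case: (ltnP b N) => [lt_bN | le_Nb]; first by apply: splice_after => //; apply: ltnW.
have eN : N = b by lia.
by rewrite (splice_at_end eN) /wend ltnNge le_Nb.
Qed.

Lemma splice_cost_diff :
  track_cost A B N Q Rw QN theta splice - track_cost A B N Q Rw QN theta u
  = 2^-1 * (\sum_(a <= k < b) stage splice k - \sum_(a <= k < b) stage u k)
    + 2^-1 * (qform QN (traj A B splice N - theta N) - qform QN (x N - theta N)).
Proof.
rewrite /track_cost -/x.
rewrite -[\sum_(t < N) _]/(\sum_(k < N) stage splice k).
rewrite -[\sum_(t < N) (qform (Q t) _ + _)]/(\sum_(k < N) stage u k) !stage_sum_split.
have same_before : \sum_(0 <= k < a) stage splice k = \sum_(0 <= k < a) stage u k.
  rewrite !big_nat; apply: eq_bigr => k /andP [_ lt_ka].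
  have outside : (a <= k < b)%N = false by lia.
  by rewrite /stage (splice_before (ltnW lt_ka)) /splice outside.
have same_after : \sum_(b <= k < N) stage splice k = \sum_(b <= k < N) stage u k.
  rewrite !big_nat; apply: eq_bigr => k /andP [le_bk lt_kN].
  have outside : (a <= k < b)%N = false by lia.
  by rewrite /stage (splice_after (leq_ltn_trans le_bk lt_kN) le_bk) /splice outside.
by rewrite same_before same_after; ring.
Qed.

End Splice.

Section WindowInequality.
Variable R : rcfType.
Variables n m : nat.
Variable A : 'M[R]_n.
Variable B : 'M[R]_(n, m).
Variables (mu_f mu_g l_f l_g thetabar : R) (Pbar Punder : 'M[R]_n).
Hypotheses (ctrl : controllable A B) (mu_f_gt0 : 0 < mu_f) (mu_g_gt0 : 0 < mu_g)
  (l_f_gt0 : 0 < l_f) (l_g_gt0 : 0 < l_g) (Punder_pd : posdef Punder).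

Definition th2 := thetabar ^+ 2.
Definition c_term := 2^-1 * (1 + gain Pbar).
Definition c_start := n%:R * kill_cost A B l_f l_g.
Definition c_end := n%:R * arrive_cost A B l_f l_g.
(* Uniform lower bound of the stage cost in terms of |x|^2 + |u|^2. *)
Definition mu := Num.min (2^-1 * mu_f) mu_g.
(* |A x + B u|^2 <= kappa (|x|^2 + |u|^2). *)
Definition kappa := 2 * (gain A + gain B).
(* Cost per step that does not depend on the states. *)
Definition c_step := 2 * l_f * th2 + c_term * th2 + mu_f * th2.
Definition Cwin := (1 + kappa) * mu^-1 * (c_start + c_end) + 1.
Definition Dwin := (1 + kappa) * mu^-1 * c_step.

Lemma th2_ge0 : 0 <= th2. Proof. exact: sqr_ge0. Qed.
Lemma c_term_ge0 : 0 <= c_term.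
Proof. by rewrite mulr_ge0 ?invr_ge0 ?ler0n // addr_ge0 ?gain_ge0. Qed.
Lemma c_start_ge0 : 0 <= c_start.
Proof. by rewrite mulr_ge0 ?ler0n ?kill_cost_ge0 ?ltW. Qed.
Lemma c_end_ge0 : 0 <= c_end.
Proof. by rewrite mulr_ge0 ?ler0n ?arrive_cost_ge0 ?ltW. Qed.
Lemma kappa_ge0 : 0 <= kappa.
Proof. by rewrite mulr_ge0 // addr_ge0 ?gain_ge0. Qed.
Lemma mu_gt0 : 0 < mu.
Proof. by rewrite lt_min mu_g_gt0 andbT mulr_gt0 // invr_gt0 ltr0n. Qed.
Lemma c_step_ge0 : 0 <= c_step.
Proof.
have := mulr_ge0 (mulr_ge0 (ler0n R 2) (ltW l_f_gt0)) th2_ge0.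
have := mulr_ge0 c_term_ge0 th2_ge0; have := mulr_ge0 (ltW mu_f_gt0) th2_ge0.
rewrite /c_step; lra.
Qed.

Lemma mu_kappa_ge0 : 0 <= (1 + kappa) * mu^-1.
Proof. by rewrite mulr_ge0 ?addr_ge0 ?kappa_ge0 // invr_ge0 ltW // mu_gt0. Qed.

Lemma Cwin_ge1 : 1 <= Cwin.
Proof. by rewrite /Cwin lerDr mulr_ge0 ?mu_kappa_ge0 ?addr_ge0 ?c_start_ge0 ?c_end_ge0. Qed.

Lemma Dwin_ge0 : 0 <= Dwin.
Proof. by rewrite /Dwin mulr_ge0 ?mu_kappa_ge0 ?c_step_ge0. Qed.

Variables (N : nat) (Q : nat -> 'M[R]_n) (Rw : nat -> 'M[R]_m) (QN : 'M[R]_n)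
  (theta : nat -> 'cV[R]_n) (u : nat -> 'cV[R]_m).
Hypotheses (Q_box : forall t, (t < N)%N -> in_box (mu_f%:M) (l_f%:M) (Q t))
  (R_box : forall t, (t < N)%N -> in_box (mu_g%:M) (l_g%:M) (Rw t))
  (QN_box : in_box Punder Pbar QN)
  (theta_le : forall t, (t <= N)%N -> vnorm (theta t) <= thetabar)
  (u_opt : optimal_input A B N Q Rw QN theta u).

Let x := traj A B u.
Let y k := sqnorm (x k).
Let nu k := sqnorm (u k).

Lemma theta_sq_le k : (k <= N)%N -> sqnorm (theta k) <= th2.
Proof. by move=> le_kN; apply/sqnorm_le_of_vnorm/theta_le. Qed.

Lemma stage_lower k : (k < N)%N ->
  mu * (y k + nu k) - mu_f * th2 <= stage A B Q Rw theta u k.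
Proof.
move=> lt_kN; rewrite /stage.
have state_cost := box_lower (x k - theta k) (Q_box lt_kN).
have input_cost := box_lower (u k) (R_box lt_kN).
have x_le := sqnormD_le (x k - theta k) (theta k); rewrite subrK in x_le.
have := ler_wpM2l (ltW mu_f_gt0) x_le; have := ler_wpM2l (ltW mu_f_gt0) (theta_sq_le (ltnW lt_kN)).
have : 0 <= (2^-1 * mu_f - mu) * y k by rewrite mulr_ge0 ?sqnorm_ge0 // subr_ge0 ge_min lexx.
have : 0 <= (mu_g - mu) * nu k by rewrite mulr_ge0 ?sqnorm_ge0 // subr_ge0 ge_min lexx orbT.
rewrite -/(x k) -/(y k) -/(nu k) in x_le input_cost *; lra.
Qed.

Lemma state_step_le k : y k.+1 <= kappa * (y k + nu k).
Proof.
rewrite /y /x /= -/(x k); apply: le_trans (sqnormD_le _ _) _.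
have := sqnorm_mulmx_le A (x k); have := sqnorm_mulmx_le B (u k).
have := mulr_ge0 (gain_ge0 A) (sqnorm_ge0 (u k)).
have := mulr_ge0 (gain_ge0 B) (sqnorm_ge0 (x k)).
rewrite /kappa -/(y k) -/(nu k); lra.
Qed.

Variables (a b : nat).
Hypotheses (window : (a <= b <= N)%N) (long_window : (n <= b - a)%N \/ (a = 0%N /\ b = N)).

Lemma terminal_gap_le :
  qform QN (traj A B (splice A B N u a b) N - theta N) - qform QN (x N - theta N)
  <= c_term * th2.
Proof.
have term_ge0 : 0 <= qform QN (x N - theta N).
  by case: QN_box => _ [lo _]; apply: le_trans (lo _); exact: posdef_qform_ge0.
have ct_ge0 := mulr_ge0 c_term_ge0 th2_ge0.
rewrite splice_final //; case: ifP => _; first by lra.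
rewrite sub0r; case: QN_box => _ [_ hi]; have := hi (- theta N).
have := qform_le_gain Pbar (- theta N); rewrite sqnormN -/c_term.
have := ler_wpM2l c_term_ge0 (theta_sq_le (leqnn N)); lra.
Qed.

(* Optimality of u against the splice bounds its cost on the window. *)
Lemma window_cost_upper :
  \sum_(a <= k < b) stage A B Q Rw theta u k
  <= c_start * y a + c_end * sqnorm (wend A B N u b)
     + (b - a)%:R * (2 * l_f * th2) + c_term * th2.
Proof.
set L := (b - a)%N.
have splice_cost : \sum_(a <= k < b) stage A B Q Rw theta (splice A B N u a b) k
    <= c_start * y a + c_end * sqnorm (wend A B N u b) + L%:R * (2 * l_f * th2).
  rewrite (splice_window_cost A B Q Rw theta u window).
  have bridge_le := bridge_cost_le ctrl (T := th2) (ltW l_f_gt0) (ltW l_g_gt0)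
    (L := L) (x a) (wend A B N u b)
    (Qs := fun j => Q (j + a)) (Rs := fun j => Rw (j + a)) (th := fun j => theta (j + a)).
  apply: le_trans (bridge_le _ _ _) _ => [j lt_j v | j lt_j v | j lt_j | //].
  - by apply: box_upper; apply: Q_box; lia.
  - by apply: box_upper; apply: R_box; lia.
  - by apply: theta_sq_le; lia.
have := splice_cost_diff Q Rw QN theta u window long_window ctrl.
have := u_opt (splice A B N u a b); rewrite -subr_ge0.
have := terminal_gap_le; lra.
Qed.

Lemma window_energy_le :
  \sum_(a <= k < b) (y k + nu k)
  <= mu^-1 * ((c_start + c_end) * (y a + sqnorm (wend A B N u b)) + c_step * (b - a).+1%:R).
Proof.
set L := (b - a)%N; set S := \sum_(a <= k < b) (y k + nu k).
have lower : mu * S - L%:R * (mu_f * th2) <= \sum_(a <= k < b) stage A B Q Rw theta u k.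
  have : \sum_(a <= k < b) (mu * (y k + nu k) - mu_f * th2)
      <= \sum_(a <= k < b) stage A B Q Rw theta u k.
    by rewrite !big_nat; apply: ler_sum => k /andP [_ lt_kb]; apply: stage_lower; lia.
  by rewrite sumrB -mulr_sumr sumr_const_nat -/L -/S mulr_natl.
have upper := window_cost_upper; rewrite -/L in upper.
rewrite -(ler_pM2l mu_gt0) mulrA mulfV ?gt_eqF ?mu_gt0 // mul1r -[L.+1%:R]natr1.
set w := sqnorm (wend A B N u b) in upper *; have w_ge0 : 0 <= w by apply: sqnorm_ge0.
have ya_ge0 : 0 <= y a by apply: sqnorm_ge0.
have := mulr_ge0 c_start_ge0 w_ge0; have := mulr_ge0 c_end_ge0 ya_ge0.
have := mulr_ge0 (mulr_ge0 c_term_ge0 th2_ge0) (ler0n R L).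
have := mulr_ge0 (mulr_ge0 (ler0n R 2) (ltW l_f_gt0)) th2_ge0.
have := mulr_ge0 (ltW mu_f_gt0) th2_ge0.
rewrite /c_step -/(y a); lra.
Qed.

Lemma CwinDwinE p q :
  Cwin * p + Dwin * q = (1 + kappa) * (mu^-1 * ((c_start + c_end) * p + c_step * q)) + p.
Proof. by rewrite /Cwin /Dwin; ring. Qed.

(* The window inequality for the optimal states.  When b = N the last state
   is not controlled by the bridge; it is bounded through the dynamics. *)
Lemma window_ineq_opt :
  \sum_(a <= k < b.+1) y k
  <= Cwin * (y a + (if (b < N)%N then y b else 0)) + Dwin * (b - a).+1%:R.
Proof.
have energy := window_energy_le.
have energy_ge0 : 0 <= mu^-1 * ((c_start + c_end) * (y a + sqnorm (wend A B N u b))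
                                 + c_step * (b - a).+1%:R).
  apply: mulr_ge0; first by rewrite invr_ge0 ltW // mu_gt0.
  apply: addr_ge0; apply: mulr_ge0; rewrite ?c_step_ge0 ?ler0n //.
    by rewrite addr_ge0 ?c_start_ge0 ?c_end_ge0.
  by rewrite addr_ge0 ?sqnorm_ge0.
have y_le : \sum_(a <= k < b) y k <= \sum_(a <= k < b) (y k + nu k).
  by rewrite !big_nat; apply: ler_sum => k _; rewrite lerDl sqnorm_ge0.
have ya_ge0 : 0 <= y a by apply: sqnorm_ge0.
rewrite big_nat_recr /=; last by case/andP: window.
rewrite CwinDwinE; rewrite /wend in energy energy_ge0; case: ifP => lt_bN in energy energy_ge0 *.
  rewrite -/(y b) in energy energy_ge0; set W := mu^-1 * _ in energy energy_ge0 *.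
  by have := mulr_ge0 kappa_ge0 energy_ge0; lra.
rewrite sqnorm0 addr0 in energy energy_ge0 *; set W := mu^-1 * _ in energy energy_ge0 *.
have := mulr_ge0 kappa_ge0 energy_ge0.
have [ea | lt_ab] := eqVneq a b; first by rewrite ea big_geq // add0r; lra.
have eb1 : b = (b.-1).+1 by move: window lt_ab; clear; lia.
have last_le : y b.-1 + nu b.-1 <= \sum_(a <= k < b) (y k + nu k).
  apply: (term_le_sum_nat (y := fun k => y k + nu k)); last by move: window lt_ab; clear; lia.
  by move=> k; rewrite addr_ge0 ?sqnorm_ge0.
have := state_step_le b.-1; rewrite -eb1.
have := ler_wpM2l kappa_ge0 (le_trans last_le energy); lra.
Qed.



End WindowInequality.

Section GeometricSums.
Variable R : rcfType.

Lemma geom_sumE (r : R) K : (1 - r) * \sum_(i < K) r ^+ i = 1 - r ^+ K.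
Proof.
elim: K => [|K IH]; first by rewrite big_ord0 expr0; ring.
by rewrite big_ord_recr /= mulrDr IH exprS; ring.
Qed.

Lemma geom_wsumE (r : R) K : (1 - r) ^+ 2 * \sum_(i < K) (i.+1)%:R * r ^+ i
  = 1 - (K.+1)%:R * r ^+ K + K%:R * r ^+ K.+1.
Proof.
elim: K => [|K IH]; first by rewrite big_ord0 !expr0; ring.
rewrite big_ord_recr /= mulrDr IH !exprS -[(K.+2)%:R]natr1 -[(K.+1)%:R]natr1; ring.
Qed.

Lemma pow_le_geom_sum (r : R) K : 0 <= r -> r <= 1 ->
  (K.+1)%:R * r ^+ K <= \sum_(i < K.+1) r ^+ i.
Proof.
move=> r_ge0 r_le1; rewrite mulr_natl.
have -> : r ^+ K *+ K.+1 = \sum_(i < K.+1) r ^+ K by rewrite sumr_const card_ord.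
by apply: ler_sum => i _; apply: ler_wiXn2l => //; rewrite -ltnS.
Qed.

Definition decay (C : R) := 1 - C^-1.

Variable C : R.
Hypothesis C_ge1 : 1 <= C.

Let C_gt0 : 0 < C. Proof. exact: lt_le_trans ltr01 C_ge1. Qed.
Let Cinv_gt0 : 0 < C^-1. Proof. by rewrite invr_gt0. Qed.

Lemma decay_ge0 : 0 <= decay C.
Proof. by rewrite subr_ge0 invr_le1 // unitfE gt_eqF. Qed.

Lemma decay_le1 : decay C <= 1.
Proof. by rewrite lerBlDr lerDl invr_ge0 ltW. Qed.

Lemma geom_sum_le K : \sum_(i < K) decay C ^+ i <= C.
Proof.
rewrite -(ler_pM2l Cinv_gt0) mulVf ?gt_eqF //.
have -> : C^-1 = 1 - decay C by rewrite /decay; ring.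
by rewrite geom_sumE lerBlDr lerDl exprn_ge0 ?decay_ge0.
Qed.

Lemma geom_wsum_le K : \sum_(i < K) (i.+1)%:R * decay C ^+ i <= C ^+ 2.
Proof.
rewrite -(ler_pM2l (exprn_gt0 2 Cinv_gt0)) -exprMn mulVf ?gt_eqF // expr1n.
have -> : C^-1 = 1 - decay C by rewrite /decay; ring.
have r_ge0 := decay_ge0; have r_le1 := decay_le1.
have rK_ge0 : 0 <= decay C ^+ K by apply: exprn_ge0.
have one_minus_ge0 : 0 <= 1 - decay C by rewrite subr_ge0.
have := mulr_ge0 (mulr_ge0 rK_ge0 one_minus_ge0) (ler0n R K).
rewrite geom_wsumE exprS -[(K.+1)%:R]natr1; lra.
Qed.

End GeometricSums.

Section WindowBound.
Variable R : rcfType.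
Variables (y : nat -> R) (N n : nat) (C D : R).
Hypotheses (C_ge1 : 1 <= C) (D_ge0 : 0 <= D) (y_ge0 : forall k, 0 <= y k) (y0 : y 0%N = 0).

Hypothesis window_ineq : forall a b, (a <= b <= N)%N ->
  ((n <= b - a)%N \/ (a = 0%N /\ b = N)) ->
  \sum_(a <= k < b.+1) y k <= C * (y a + (if (b < N)%N then y b else 0)) + D * ((b - a).+1)%:R.

Variable t : nat.
Hypothesis le_tN : (t <= N)%N.

Let C_gt0 : 0 < C. Proof. exact: lt_le_trans ltr01 C_ge1. Qed.

Definition around r := \sum_(t - r <= k < (minn N (t + r)).+1) y k.

(* The window inequality for the window of radius s.+1 bounds the sum over the
   radius-s window by a fraction 1 - 1/C of the sum over the larger one. *)
Lemma around_step s : (n <= s)%N ->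
  around s <= decay C * around s.+1 + C^-1 * D * ((s.*2 + 3)%:R).
Proof.
move=> le_ns.
set a1 := (t - s.+1)%N; set a0 := (t - s)%N.
set b0 := minn N (t + s); set b1 := minn N (t + s.+1).
have around_split :
    around s.+1 = \sum_(a1 <= k < a0) y k + around s + \sum_(b0.+1 <= k < b1.+1) y k.
  rewrite /around -/a1 -/a0 -/b0 -/b1.
  rewrite (big_cat_nat (n := a0)) /=; [| rewrite /a1 /a0; lia | rewrite /a0 /b1; lia].
  rewrite (big_cat_nat (n := b0.+1) (m := a0)) /=; first by rewrite addrA.
    by rewrite /a0 /b0; lia.
  by rewrite /b0 /b1; lia.
have left_end : y a1 <= \sum_(a1 <= k < a0) y k.
  case: (ltnP a1 a0) => lt_a; first by apply: term_le_sum_nat; rewrite ?leqnn ?lt_a.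
  have -> : a1 = 0%N by rewrite /a1 /a0 in lt_a *; lia.
  by rewrite y0 sumr_ge0.
have right_end : (if (b1 < N)%N then y b1 else 0) <= \sum_(b0.+1 <= k < b1.+1) y k.
  case: ifP => lt_b1N; last exact: sumr_ge0.
  by apply: term_le_sum_nat => //; rewrite leqnn andbT /b0 /b1 in lt_b1N *; lia.
have long_window : (n <= b1 - a1)%N \/ (a1 = 0%N /\ b1 = N).
  rewrite /a1 /b1; case: (leqP (t + s.+1) N) => ?; [left; lia |].
  by case: (leqP s.+1 t) => ?; [left; lia | right; lia].
have ineq := window_ineq (a := a1) (b := b1) ltac:(rewrite /a1 /b1; lia) long_window.
have len_le : (((b1 - a1).+1)%:R : R) <= (s.*2 + 3)%:R by rewrite ler_nat /a1 /b1; lia.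
have len_cost := ler_wpM2l D_ge0 len_le.
have ends_le := ler_wpM2l (ltW C_gt0) (lerD left_end right_end).
rewrite -(ler_pM2l C_gt0) /decay.
have -> : C * ((1 - C^-1) * around s.+1 + C^-1 * D * (s.*2 + 3)%:R)
    = (C - 1) * around s.+1 + D * (s.*2 + 3)%:R by field; rewrite gt_eqF.
rewrite -/(around s.+1) around_split in ineq; rewrite around_split.
set S1 := \sum_(a1 <= k < a0) y k in ineq ends_le *.
set S2 := \sum_(b0.+1 <= k < b1.+1) y k in ineq ends_le *.
rewrite mulrDr in ends_le; rewrite !mulrDr !mulrBl !mul1r; lra.
Qed.

Lemma around_unroll j : around n <= decay C ^+ j * around (n + j)
  + C^-1 * D * \sum_(i < j) decay C ^+ i * (((n + i).*2 + 3)%:R).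
Proof.
elim: j => [|j IH]; first by rewrite expr0 mul1r addn0 big_ord0 mulr0 addr0.
apply: le_trans IH _.
have pow_ge0 := exprn_ge0 j (decay_ge0 C_ge1).
have := ler_wpM2l pow_ge0 (around_step (leq_addr j n)).
by rewrite big_ord_recr /= (addnS n j) exprS; nra.
Qed.

Lemma around_full : around (n + N) <= D * (N.+1)%:R.
Proof.
rewrite /around (_ : t - (n + N) = 0)%N; last by lia.
rewrite (_ : minn N (t + (n + N)) = N); last by lia.
have := window_ineq (a := 0%N) (b := N) ltac:(lia) (or_intror (conj erefl erefl)).
by rewrite ltnn subn0 y0 addr0 mulr0 add0r.
Qed.

(* The sequence lemma: unroll N steps from radius n to the full horizon. *)
Lemma window_bound : y t <= D * C * ((n.*2 + 4)%:R).
Proof.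
have y_le : y t <= around n by apply: term_le_sum_nat => //; apply/andP; split; lia.
apply: le_trans y_le _; apply: le_trans (around_unroll N) _.
have far_le : decay C ^+ N * around (n + N) <= D * C.
  apply: le_trans (ler_wpM2l (exprn_ge0 N (decay_ge0 C_ge1)) around_full) _.
  rewrite mulrCA; apply: ler_wpM2l => //; rewrite mulrC.
  exact: le_trans (pow_le_geom_sum _ (decay_ge0 C_ge1) (decay_le1 C_ge1)) (geom_sum_le C_ge1 _).
have near_le : \sum_(i < N) decay C ^+ i * (((n + i).*2 + 3)%:R)
    <= (n.*2 + 3)%:R * \sum_(i < N) (i.+1)%:R * decay C ^+ i.
  rewrite mulr_sumr; apply: ler_sum => i _.
  rewrite mulrA [_ * decay C ^+ i]mulrC; apply: ler_wpM2l; first exact: exprn_ge0 (decay_ge0 C_ge1).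
  by rewrite -natrM ler_nat; nia.
have CD_ge0 : 0 <= C^-1 * D by rewrite mulr_ge0 // invr_ge0 ltW.
have := ler_wpM2l CD_ge0 near_le.
have := ler_wpM2l (mulr_ge0 CD_ge0 (ler0n R (n.*2 + 3))) (geom_wsum_le C_ge1 N).
have -> : C^-1 * D * (n.*2 + 3)%:R * C ^+ 2 = D * C * (n.*2 + 3)%:R.
  by rewrite expr2; field; rewrite gt_eqF.
have -> : ((n.*2 + 4)%:R : R) = (n.*2 + 3)%:R + 1 by rewrite -[1]/(1%:R) -natrD -addnA.
rewrite -mulrA; lra.
Qed.

End WindowBound.

Unset Implicit Arguments. Set Strict Implicit.

Theorem lemma7 (R : rcfType) (n m : nat) (A : 'M[R]_n) (B : 'M[R]_(n, m))
    (mu_f mu_g l_f l_g thetabar : R) (Pbar Punder : 'M[R]_n) :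
  controllable A B ->
  0 < mu_f -> 0 < mu_g -> 0 < l_f -> 0 < l_g ->
  DARE_pd_sol A B (l_f%:M) (l_g%:M) Pbar ->
  DARE_pd_sol A B (mu_f%:M) (mu_g%:M) Punder ->
  exists xbar : R,
    forall (N : nat) (Q : nat -> 'M[R]_n) (Rw : nat -> 'M[R]_m) (QN : 'M[R]_n)
           (theta : nat -> 'cV[R]_n) (u : nat -> 'cV[R]_m),
      (forall t, (t < N)%N -> in_box (mu_f%:M) (l_f%:M) (Q t)) ->
      (forall t, (t < N)%N -> in_box (mu_g%:M) (l_g%:M) (Rw t)) ->
      in_box Punder Pbar QN ->
      (forall t, (t <= N)%N -> vnorm (theta t) <= thetabar) ->
      optimal_input A B N Q Rw QN theta u ->
      forall t, (t <= N)%N -> vnorm (traj A B u t) <= xbar.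
Proof.
move=> ctrl mu_f_gt0 mu_g_gt0 l_f_gt0 l_g_gt0 _ [Punder_pd _].
set C := Cwin A B mu_f mu_g l_f l_g.
set D := Dwin A B mu_f mu_g l_f thetabar Pbar.
exists (Num.sqrt (D * C * (n.*2 + 4)%:R)).
move=> N Q Rw QN theta u Q_box R_box QN_box theta_le u_opt t le_tN.
apply: vnorm_le_sqrt.
apply: (window_bound (y := fun k => sqnorm (traj A B u k)) (N := N) (n := n)) => //.
- exact: (Cwin_ge1 A B mu_f_gt0 mu_g_gt0 l_f_gt0 l_g_gt0).
- exact: (Dwin_ge0 A B thetabar Pbar mu_f_gt0 mu_g_gt0 l_f_gt0).
- by move=> k; apply: sqnorm_ge0.
- by rewrite /= sqnorm0.
- move=> a b window long_window.
  exact: (window_ineq_opt ctrl mu_f_gt0 mu_g_gt0 l_f_gt0 l_g_gt0 Punder_pd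
    Q_box R_box QN_box theta_le u_opt window long_window).
Qed.
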